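(* For every positive integer $n$, the Aztec diamond $\operatorname{AD}(n)$ has no 180-cover.
   Context: A cell is a unit square $[i,i+1]\times[j,j+1]$ with $i,j\in\mathbb{Z}$, labelled $(i,j)$. The right-oriented trominoes are the translates of $\{(0,0),(1,0),(1,1)\}$ and of $\{(0,0),(0,1),(1,1)\}$; the left-oriented trominoes are the translates of $\{(0,1),(1,0),(1,1)\}$ and of $\{(0,0),(0,1),(1,0)\}$. A 180-cover of a region $R$ is a partition of $R$ into trominoes which are either all right-oriented or all left-oriented. The Aztec diamond $\operatorname{AD}(n)$ is the union of the cells $[a,a+1]\times[b,b+1]$, $a,b\in\mathbb{Z}$, lying completely inside $\{(x,y): |x|+|y|\le n+1\}$. *)

From Stdlib Require Import ZArith List.
Import ListNotations.
Open Scope Z_scope.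

(* The cell [i,i+1]x[j,j+1] is labelled (i,j). *)
Definition cell : Type := (Z * Z)%type.

Inductive shape : Type := RightA | RightB | LeftA | LeftB.

Definition shape_cells (s : shape) : list cell :=
  match s with
  | RightA => [(0,0); (1,0); (1,1)]
  | RightB => [(0,0); (0,1); (1,1)]
  | LeftA  => [(0,1); (1,0); (1,1)]
  | LeftB  => [(0,0); (0,1); (1,0)]
  end.

Definition right_oriented (s : shape) : Prop := s = RightA \/ s = RightB.
Definition left_oriented (s : shape) : Prop := s = LeftA \/ s = LeftB.

Definition tromino : Type := (shape * (Z * Z))%type.

Definition in_tromino (t : tromino) (c : cell) : Prop :=
  let '(s, (a, b)) := t in
  exists d : cell, In d (shape_cells s) /\ c = (a + fst d, b + snd d).

Definition region : Type := cell -> Prop.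

Definition is_180_cover (R : region) (T : tromino -> Prop) : Prop :=
  ((forall t, T t -> right_oriented (fst t)) \/
   (forall t, T t -> left_oriented (fst t))) /\
  (forall t c, T t -> in_tromino t c -> R c) /\
  (forall c, R c -> exists! t, T t /\ in_tromino t c).

Definition has_180_cover (R : region) : Prop := exists T, is_180_cover R T.

(* Aztec diamond AD(n): the cells [a,a+1]x[b,b+1] lying completely inside
   {(x,y) : |x|+|y| <= n+1}.  Since the region is convex, a unit square lies
   inside it iff its four corners do. *)
Definition in_diamond (n x y : Z) : Prop := Z.abs x + Z.abs y <= n + 1.

Definition AD (n : Z) : region := fun c =>
  let '(a, b) := c in
  in_diamond n a b /\ in_diamond n (a + 1) b /\
  in_diamond n a (b + 1) /\ in_diamond n (a + 1) (b + 1).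

From Stdlib Require Import ZArith List Permutation Lia.
Open Scope Z_scope.

(* Weight a cell (a,b) by (a+b) mod 3 - 1.  The three cells of a right-oriented
   tromino lie on three consecutive antidiagonals, so every right-oriented
   tromino has total weight 0, and a right-oriented 180-cover of AD(n) would
   force the total weight of AD(n) to vanish.  Summing antidiagonal by
   antidiagonal, that total is n, 1 or -(n+1) according to n mod 3.  The
   reflection (a,b) |-> (-a-1,b) preserves AD(n) and exchanges the two
   orientations, which disposes of left-oriented covers in the same way. *)

Ltac mod_lia := Z.div_mod_to_equations; lia.

Definition sumZ (l : list Z) : Z := fold_right Z.add 0 l.

Lemma sumZ_app l1 l2 : sumZ (l1 ++ l2) = sumZ l1 + sumZ l2.
Proof. induction l1; simpl; lia. Qed.

Lemma sumZ_perm l l' : Permutation l l' -> sumZ l = sumZ l'.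
Proof. induction 1; simpl; lia. Qed.

Lemma sumZ_const {A} (c : Z) (l : list A) :
  sumZ (map (fun _ => c) l) = Z.of_nat (length l) * c.
Proof.
  induction l as [|x l IH]; [reflexivity|].
  unfold sumZ in *; cbn [map fold_right length]. rewrite IH, Nat2Z.inj_succ. ring.
Qed.

Lemma sumZ_scale {A} (c : Z) (f : A -> Z) l :
  sumZ (map (fun x => c * f x) l) = c * sumZ (map f l).
Proof.
  induction l as [|x l IH]; unfold sumZ in *; simpl; [ring|]. rewrite IH. ring.
Qed.

Lemma sumZ_filter {A} (w : A -> Z) (P : A -> bool) l :
  sumZ (map w l) =
  sumZ (map w (filter P l)) + sumZ (map w (filter (fun x => negb (P x)) l)).
Proof. induction l as [|x l IH]; simpl; auto. destruct (P x); simpl; lia. Qed.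

Lemma sumZ_list_prod {A B} (h : A * B -> Z) l1 l2 :
  sumZ (map h (list_prod l1 l2)) =
  sumZ (map (fun x => sumZ (map (fun y => h (x, y)) l2)) l1).
Proof.
  induction l1; simpl; auto. rewrite map_app, sumZ_app, map_map, IHl1. reflexivity.
Qed.

Lemma NoDup_list_prod {A B} (l1 : list A) (l2 : list B) :
  NoDup l1 -> NoDup l2 -> NoDup (list_prod l1 l2).
Proof.
  induction 1 as [|x l1 Hx H1 IH]; intros H2; simpl; [constructor|].
  apply NoDup_app; auto.
  - apply FinFun.Injective_map_NoDup; auto. intros y y' E; injection E; auto.
  - intros [a b] Ha Hb. apply in_map_iff in Ha as [y [E _]]. injection E as <- _.
    apply in_prod_iff in Hb. tauto.
Qed.

Section TiledSums.

Variables (A Tile : Type) (A_eq_dec : forall x y : A, {x = y} + {x <> y}).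
Variables (cells : Tile -> list A) (w : A -> Z).
Hypothesis cells_NoDup : forall t, NoDup (cells t).

Definition inb (x : A) (l : list A) : bool := if in_dec A_eq_dec x l then true else false.

Lemma inb_spec x l : inb x l = true <-> In x l.
Proof. unfold inb; destruct (in_dec A_eq_dec x l); intuition discriminate. Qed.

Definition outside (l L : list A) : list A := filter (fun x => negb (inb x l)) L.

Lemma In_outside x l L : In x (outside l L) <-> In x L /\ ~ In x l.
Proof.
  unfold outside; rewrite filter_In, <- (inb_spec x l).
  destruct (inb x l); simpl; split; intros [Hx H]; split; auto; try discriminate.
Qed.

Lemma sumZ_split_incl l L : NoDup l -> NoDup L -> incl l L ->
  sumZ (map w L) = sumZ (map w l) + sumZ (map w (outside l L)).
Proof.
  intros Hl HL Hincl. rewrite (sumZ_filter w (fun x => inb x l)). f_equal.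
  apply sumZ_perm, Permutation_map, NoDup_Permutation; [now apply NoDup_filter | exact Hl |].
  intros x; rewrite filter_In, inb_spec. intuition.
Qed.

Lemma sumZ_tiled (L : list A) (T : Tile -> Prop) :
  NoDup L ->
  (forall t, T t -> sumZ (map w (cells t)) = 0) ->
  (forall t c, T t -> In c (cells t) -> In c L) ->
  (forall c, In c L -> exists! t, T t /\ In c (cells t)) ->
  sumZ (map w L) = 0.
Proof.
  revert T; induction L as [L IH] using (well_founded_ind (Wf_nat.well_founded_ltof _ (@length A))).
  intros T HL Hw Hsub Hcov.
  destruct L as [|c L0]; [reflexivity|].
  destruct (Hcov c (or_introl eq_refl)) as [t [[Tt ct] Hu]].
  assert (Hincl : incl (cells t) (c :: L0)) by (intros x; apply Hsub, Tt).
  rewrite (sumZ_split_incl (cells t)), (Hw t Tt); auto.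
  (* The tile through [c] is removed; the remaining tiles partition the rest. *)
  apply IH with (T := fun t' => T t' /\ t' <> t).
  - unfold Wf_nat.ltof, outside; simpl. rewrite (proj2 (inb_spec c (cells t)) ct).
    apply Nat.lt_succ_r, filter_length_le.
  - now apply NoDup_filter.
  - intros t' [Tt' _]; auto.
  - intros t' x [Tt' Hne] Hx. apply In_outside. split; [now apply (Hsub t') |].
    intros Hxt. destruct (Hcov x (Hsub t' x Tt' Hx)) as [t0 [_ U]].
    apply Hne. rewrite <- (U t'), <- (U t); auto.
  - intros x Hx. apply In_outside in Hx as [HxL Hxt].
    destruct (Hcov x HxL) as [t0 [[T0 x0] U]].
    exists t0. split; [repeat split; auto; intros ->; contradiction|].
    intros t' [[Tt' _] Hx']. apply U; auto.
Qed.

End TiledSums.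

Arguments sumZ_tiled {A Tile} A_eq_dec cells w cells_NoDup L T.

Definition cell_eq_dec : forall x y : cell, {x = y} + {x <> y}.
Proof. decide equality; apply Z.eq_dec. Defined.

Definition tromino_cells (t : tromino) : list cell :=
  let '(s, (a, b)) := t in map (fun d => (a + fst d, b + snd d)) (shape_cells s).

Lemma in_tromino_cells t c : in_tromino t c <-> In c (tromino_cells t).
Proof.
  destruct t as [s [a b]]; unfold in_tromino, tromino_cells; rewrite in_map_iff.
  split; intros [d [H1 H2]]; exists d; split; auto.
Qed.

Lemma tromino_cells_NoDup t : NoDup (tromino_cells t).
Proof.
  destruct t as [[] [a b]]; simpl; repeat constructor; simpl;
  intros H; repeat destruct H as [H|H]; try injection H; lia.
Qed.

Lemma sumZ_cover (R : region) (L : list cell) (T : tromino -> Prop) (w : cell -> Z) :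
  NoDup L -> (forall c, In c L <-> R c) ->
  (forall t c, T t -> in_tromino t c -> R c) ->
  (forall c, R c -> exists! t, T t /\ in_tromino t c) ->
  (forall t, T t -> sumZ (map w (tromino_cells t)) = 0) ->
  sumZ (map w L) = 0.
Proof.
  intros HL HR Hsub Hcov Hw.
  apply (sumZ_tiled cell_eq_dec tromino_cells w tromino_cells_NoDup L T HL Hw).
  - intros t c Tt Hc. apply HR, (Hsub t c Tt), in_tromino_cells, Hc.
  - intros c Hc. destruct (Hcov c (proj1 (HR c) Hc)) as [t [[Tt Ht] U]].
    exists t. split; [split; [exact Tt | now apply in_tromino_cells]|].
    intros t' [Tt' Ht']. apply U. split; [exact Tt' | now apply in_tromino_cells].
Qed.

Definition mod3_weight (s : Z) : Z := s mod 3 - 1.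

Definition right_weight (c : cell) : Z := mod3_weight (fst c + snd c).
Definition left_weight (c : cell) : Z := mod3_weight (snd c - fst c - 1).

Lemma right_tromino_weight t : right_oriented (fst t) ->
  sumZ (map right_weight (tromino_cells t)) = 0.
Proof.
  destruct t as [s [a b]]; simpl; intros [-> | ->];
  unfold right_weight, mod3_weight; simpl; mod_lia.
Qed.

Lemma left_tromino_weight t : left_oriented (fst t) ->
  sumZ (map left_weight (tromino_cells t)) = 0.
Proof.
  destruct t as [s [a b]]; simpl; intros [-> | ->];
  unfold left_weight, mod3_weight; simpl; mod_lia.
Qed.

Fixpoint ap_weight (s d : Z) (m : nat) : Z :=
  match m with O => 0 | S m' => mod3_weight s + ap_weight (s + d) d m' end.

Lemma ap_weight_congr d m s s' : s mod 3 = s' mod 3 -> ap_weight s d m = ap_weight s' d m.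
Proof.
  revert s s'; induction m as [|m IH]; intros s s' H; simpl; [reflexivity|].
  unfold mod3_weight at 1 2; rewrite H, (IH (s + d) (s' + d)); [reflexivity | mod_lia].
Qed.

Lemma ap_weight_period s d m : d mod 3 <> 0 -> ap_weight s d (3 + m) = ap_weight s d m.
Proof.
  intros Hd; simpl. rewrite (ap_weight_congr d m (s + d + d + d) s) by mod_lia.
  unfold mod3_weight; mod_lia.
Qed.

Lemma ap_weight_reduce s s0 d q r : d mod 3 <> 0 -> s mod 3 = s0 mod 3 ->
  ap_weight s d (3 * q + r) = ap_weight s0 d r.
Proof.
  intros Hd Hs. rewrite (ap_weight_congr d _ s s0 Hs).
  induction q as [|q IH]; [reflexivity|].
  replace (3 * S q + r)%nat with (3 + (3 * q + r))%nat by lia.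
  now rewrite ap_weight_period.
Qed.

Lemma sumZ_ap_weight s d j m :
  sumZ (map (fun i => mod3_weight (s + d * Z.of_nat i)) (seq j m)) =
  ap_weight (s + d * Z.of_nat j) d m.
Proof.
  revert j; induction m as [|m IH]; intros j; simpl; [reflexivity|].
  rewrite IH, Nat2Z.inj_succ. f_equal. f_equal. ring.
Qed.

(* Diagonal coordinates: [diamond_cell_odd N (i,k)] runs over the cells (a,b)
   of AD(N) with a + b + N odd, [diamond_cell_even] over those with a + b + N
   even; in both, a + b depends on i only. *)
Definition diamond_cell_odd (N : nat) (p : nat * nat) : cell :=
  (- Z.of_nat N + Z.of_nat (fst p) + Z.of_nat (snd p), -1 + Z.of_nat (fst p) - Z.of_nat (snd p)).
Definition diamond_cell_even (N : nat) (p : nat * nat) : cell :=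
  (- Z.of_nat N + Z.of_nat (fst p) + Z.of_nat (snd p), Z.of_nat (fst p) - Z.of_nat (snd p)).

Definition diamond_cells (N : nat) : list cell :=
  map (diamond_cell_odd N) (list_prod (seq 0 (S N)) (seq 0 N)) ++
  map (diamond_cell_even N) (list_prod (seq 0 N) (seq 0 (S N))).

Lemma diamond_cells_NoDup N : NoDup (diamond_cells N).
Proof.
  unfold diamond_cells, diamond_cell_odd, diamond_cell_even.
  apply NoDup_app.
  - apply FinFun.Injective_map_NoDup; [|apply NoDup_list_prod; apply seq_NoDup].
    intros [i k] [i' k'] E; apply pair_equal_spec in E; cbn [fst snd] in E; f_equal; lia.
  - apply FinFun.Injective_map_NoDup; [|apply NoDup_list_prod; apply seq_NoDup].
    intros [i k] [i' k'] E; apply pair_equal_spec in E; cbn [fst snd] in E; f_equal; lia.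
  - intros c H1 H2.
    apply in_map_iff in H1 as [[i k] [<- _]], H2 as [[i' k'] [E _]].
    apply pair_equal_spec in E; cbn [fst snd] in E; lia.
Qed.

Lemma In_diamond_cells N c : In c (diamond_cells N) <-> AD (Z.of_nat N) c.
Proof.
  destruct c as [a b]. unfold diamond_cells, AD, in_diamond.
  rewrite in_app_iff, !in_map_iff. split.
  - intros [[[i k] [E H]]|[[i k] [E H]]]; apply in_prod_iff in H; rewrite !in_seq in H;
    unfold diamond_cell_odd, diamond_cell_even in E; apply pair_equal_spec in E; cbn [fst snd] in E; lia.
  - intros H.
    destruct (Z.eq_dec ((a + b + Z.of_nat N + 1) mod 2) 0) as [Hp|Hp].
    + left. exists (Z.to_nat ((a + b + Z.of_nat N + 1) / 2), Z.to_nat ((a - b + Z.of_nat N - 1) / 2)).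
      rewrite in_prod_iff, !in_seq. unfold diamond_cell_odd; cbn [fst snd].
      split; [f_equal|]; mod_lia.
    + right. exists (Z.to_nat ((a + b + Z.of_nat N) / 2), Z.to_nat ((a - b + Z.of_nat N) / 2)).
      rewrite in_prod_iff, !in_seq. unfold diamond_cell_even; cbn [fst snd].
      split; [f_equal|]; mod_lia.
Qed.

Definition reflect_cell (c : cell) : cell := (- fst c - 1, snd c).

Lemma AD_reflect_cell n c : AD n (reflect_cell c) <-> AD n c.
Proof. destruct c as [a b]; unfold AD, in_diamond, reflect_cell; simpl; lia. Qed.

Lemma diamond_left_weight N :
  sumZ (map left_weight (diamond_cells N)) = sumZ (map right_weight (diamond_cells N)).
Proof.
  transitivity (sumZ (map right_weight (map reflect_cell (diamond_cells N)))).
  - rewrite map_map. f_equal. apply map_ext; intros [a b].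
    unfold left_weight, right_weight, reflect_cell; simpl. f_equal. ring.
  - apply sumZ_perm, Permutation_map, NoDup_Permutation.
    + apply FinFun.Injective_map_NoDup; [|apply diamond_cells_NoDup].
      intros [a b] [a' b'] E; apply pair_equal_spec in E; cbn [fst snd] in E.
      f_equal; lia.
    + apply diamond_cells_NoDup.
    + intros c. rewrite In_diamond_cells, <- AD_reflect_cell, <- In_diamond_cells.
      split.
      * intros Hc. apply in_map_iff in Hc as [d [<- Hd]].
        replace (reflect_cell (reflect_cell d)) with d; [exact Hd|].
        destruct d; unfold reflect_cell; simpl; f_equal; lia.
      * intros Hc. apply in_map_iff. exists (reflect_cell c). split; [|exact Hc].
        destruct c; unfold reflect_cell; simpl; f_equal; lia.
Qed.

Lemma diamond_right_weight N :
  sumZ (map right_weight (diamond_cells N)) =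
  Z.of_nat N * ap_weight (- Z.of_nat N - 1) 2 (S N) + (Z.of_nat N + 1) * ap_weight (- Z.of_nat N) 2 N.
Proof.
  unfold diamond_cells. rewrite map_app, sumZ_app, !map_map, !sumZ_list_prod. f_equal.
  - rewrite (map_ext _ (fun i => Z.of_nat N * mod3_weight (- Z.of_nat N - 1 + 2 * Z.of_nat i))).
    + rewrite sumZ_scale, sumZ_ap_weight. f_equal. f_equal. simpl. ring.
    + intros i. rewrite (map_ext _ (fun _ => mod3_weight (- Z.of_nat N - 1 + 2 * Z.of_nat i))).
      * rewrite sumZ_const, length_seq. reflexivity.
      * intros k. unfold right_weight, diamond_cell_odd; cbn [fst snd]. f_equal. ring.
  - rewrite (map_ext _ (fun i => (Z.of_nat N + 1) * mod3_weight (- Z.of_nat N + 2 * Z.of_nat i))).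
    + rewrite sumZ_scale, sumZ_ap_weight. f_equal. f_equal. simpl. ring.
    + intros i. rewrite (map_ext _ (fun _ => mod3_weight (- Z.of_nat N + 2 * Z.of_nat i))).
      * rewrite sumZ_const, length_seq. f_equal. lia.
      * intros k. unfold right_weight, diamond_cell_even; cbn [fst snd]. f_equal. ring.
Qed.

Lemma diamond_right_weight_neq0 N : (1 <= N)%nat ->
  sumZ (map right_weight (diamond_cells N)) <> 0.
Proof.
  intros HN. rewrite diamond_right_weight.
  assert (Hr : (N mod 3 < 3)%nat) by (apply Nat.mod_upper_bound; discriminate).
  rewrite (Nat.div_mod_eq N 3) in HN |- *. set (q := (N / 3)%nat) in *.
  destruct (N mod 3)%nat as [|[|[|r]]]; [| | |lia].
  - replace (S (3 * q + 0)) with (3 * q + 1)%nat by lia.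
    rewrite (ap_weight_reduce _ 2 2 q 1), (ap_weight_reduce _ 0 2 q 0) by mod_lia.
    simpl. unfold mod3_weight. simpl. lia.
  - replace (S (3 * q + 1)) with (3 * q + 2)%nat by lia.
    rewrite (ap_weight_reduce _ 1 2 q 2), (ap_weight_reduce _ 2 2 q 1) by mod_lia.
    simpl. unfold mod3_weight. simpl. lia.
  - replace (S (3 * q + 2)) with (3 * (q + 1) + 0)%nat by lia.
    rewrite (ap_weight_reduce _ 0 2 (q + 1) 0), (ap_weight_reduce _ 1 2 q 2) by mod_lia.
    simpl. unfold mod3_weight. simpl. lia.
Qed.

Theorem corollary5 (n : Z) (hn : 1 <= n) : ~ has_180_cover (AD n).
Proof.
  intros [T [Horient [Hsub Hcov]]].
  set (N := Z.to_nat n). assert (En : n = Z.of_nat N) by (unfold N; lia).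
  rewrite En in Hsub, Hcov.
  apply (diamond_right_weight_neq0 N); [lia|].
  destruct Horient as [Hright | Hleft]; [|rewrite <- diamond_left_weight];
    apply (sumZ_cover (AD (Z.of_nat N)) (diamond_cells N) T);
    auto using diamond_cells_NoDup, In_diamond_cells; intros t Tt.
  - now apply right_tromino_weight, Hright.
  - now apply left_tromino_weight, Hleft.
Qed.
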